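(* Let $k\ge 3$, let $w$ be a word over $\Sigma=\{a,b\}$, and let $j\ge k$ be a forbidden position in $w$ with respect to $S_k$. Then the position $j-k$ is forbidden in $w$ with respect to $S_k$ if and only if either $j-1$ is forbidden in $w$ or $w[j-k+1..j-1]\in\{a^{k-1},b^{k-1}\}$.
   Context: $\Sigma=\{a,b\}$. For $k\ge 3$, $S_k=\left(\Sigma^k\setminus\{ba^{k-1},b^{k-1}a\}\right)\cup\left(\Sigma^{k-1}\setminus\{a^{k-1},b^{k-1}\}\right)$. For a set $S$ of words, $\mathit{Pref}(S^* )$ is the set of all prefixes (including the empty word) of words in $S^*$. For a word $w=w_1\cdots w_n$ and indices $i,j$, $w[i..j]=w_iw_{i+1}\cdots w_j$ if $i\le j$ and the empty word if $i>j$. A position $j$ with $0\le j\le n-1$ is forbidden in $w$ (with respect to $S_k$) if $w[j+1..n]\notin\mathit{Pref}(S_k^* )$, i.e. the suffix of $w$ obtained by deleting the first $j$ letters is not a prefix of any word in $S_k^*$. *)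

From HB Require Import structures.
From mathcomp Require Import all_boot.
Set Implicit Arguments. Unset Strict Implicit. Unset Printing Implicit Defensive.

Inductive letter := la | lb.

Definition letter_eqb (x y : letter) : bool :=
  match x, y with la, la | lb, lb => true | _, _ => false end.
Lemma letter_eqP : Equality.axiom letter_eqb.
Proof. by case; case; constructor. Qed.
HB.instance Definition _ := hasDecEq.Build letter letter_eqP.

Definition word := seq letter.

Definition inS (k : nat) (u : word) : bool :=
  ((size u == k) && (u != lb :: nseq k.-1 la) && (u != rcons (nseq k.-1 lb) la))
  || ((size u == k.-1) && (u != nseq k.-1 la) && (u != nseq k.-1 lb)).

Definition inSstar (k : nat) (u : word) : Prop :=
  exists us : seq word, all (inS k) us /\ flatten us = u.

Definition inPrefSstar (k : nat) (u : word) : Prop :=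
  exists v : word, inSstar k (u ++ v).

(* Position j (0 <= j <= |w|-1) is forbidden in w w.r.t. S_k:
   w[j+1..n] = drop j w is not in Pref(S_k^star). *)
Definition forbidden (k : nat) (w : word) (j : nat) : Prop :=
  j < size w /\ ~ inPrefSstar k (drop j w).

(* factor w[i..j] (1-indexed, inclusive; empty if i > j) *)
Definition factor (w : word) (i j : nat) : word :=
  take (j.+1 - i) (drop i.-1 w).

(* Every word of [S_k] has length [k] or [k-1]. If the suffix starting at
   position [j] is not in [Pref(S_k^star)], a factorisation of the suffix
   starting at [j-k] cannot begin with a word of length [k]; so that suffix is
   in [Pref(S_k^star)] exactly when it begins with a word of [S_k] of length
   [k-1], i.e. [w[j-k+1..j-1]], followed by a prefix of [S_k^star], i.e. the
   suffix starting at [j-1]. Among the words of length [k-1], [S_k] misses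
   exactly [a^(k-1)] and [b^(k-1)]. *)
From mathcomp Require Import all_boot zify.

Lemma inS_size {k u} : inS k u -> size u = k \/ size u = k.-1.
Proof.
by case/orP=> /andP [/andP [/eqP -> _] _]; [left | right].
Qed.

Lemma inS_pred_size k u : 0 < k -> size u = k.-1 ->
  inS k u = (u != nseq k.-1 la) && (u != nseq k.-1 lb).
Proof.
move=> k_gt0 szu; rewrite /inS szu eqxx /=.
by rewrite -{2}(prednK k_gt0) (ltn_eqF (ltnSn _)).
Qed.

Lemma inPrefSstar_cat k u v :
  inS k u -> inPrefSstar k v -> inPrefSstar k (u ++ v).
Proof.
move=> Su [t [us [Sus def_vt]]]; exists t, (u :: us).
by rewrite /= Su Sus -catA def_vt.
Qed.

Lemma inPrefSstar_head {k x} : 0 < k -> k <= size x -> inPrefSstar k x ->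
  exists2 u, inS k u & [/\ take (size u) x = u & inPrefSstar k (drop (size u) x)].
Proof.
move=> k_gt0 k_le_x [t [[|u us] [/= Sus def_xt]]].
  by case: x def_xt k_le_x => // _; rewrite leqNgt k_gt0.
case/andP: Sus => Su Sus.
have szu : size u <= size x.
  by case: (inS_size Su) => ->; rewrite ?(leq_trans (leq_pred k)).
move: def_xt; rewrite -{1}(cat_take_drop (size u) x) -catA => /eqP.
rewrite eqseq_cat ?size_takel // => /andP [/eqP take_u /eqP def_rest].
exists u => //; split; first by rewrite -take_u.
by exists t, us; split.
Qed.

Lemma inPrefSstar_short_head {k x} : 0 < k -> k <= size x ->
  ~ inPrefSstar k (drop k x) ->
  inPrefSstar k x <-> inS k (take k.-1 x) /\ inPrefSstar k (drop k.-1 x).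
Proof.
move=> k_gt0 k_le_x nPk; split.
- case/(inPrefSstar_head k_gt0 k_le_x)=> u Su [take_u Pu].
  case: (inS_size Su) => szu; first by rewrite szu in Pu.
  by rewrite -szu take_u.
- case=> Su Pu; rewrite -(cat_take_drop k.-1 x).
  exact: inPrefSstar_cat.
Qed.

Lemma factorE w i m : factor w i.+1 (i + m) = take m (drop i w).
Proof. by rewrite /factor subSS addKn. Qed.

Theorem lemma1 (k : nat) (w : word) (j : nat) :
  3 <= k -> k <= j -> forbidden k w j ->
  (forbidden k w (j - k) <->
   (forbidden k w (j - 1) \/
    factor w (j - k + 1) (j - 1) = nseq k.-1 la \/
    factor w (j - k + 1) (j - 1) = nseq k.-1 lb)).
Proof.
move=> k_ge3 k_le_j [j_lt_w nPj].
have k_gt0 : 0 < k by apply: leq_trans k_ge3.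
have j1E : j - 1 = j - k + k.-1 by lia.
set x := drop (j - k) w.
have dropkx : drop k x = drop j w by rewrite drop_drop subnKC.
have dropk1x : drop k.-1 x = drop (j - 1) w by rewrite drop_drop addnC j1E.
have k_le_x : k <= size x by rewrite size_drop; lia.
have szp : size (take k.-1 x) = k.-1.
  by rewrite size_takel // (leq_trans (leq_pred k)).
rewrite addn1 j1E factorE -/x -j1E /forbidden.
rewrite !(leq_ltn_trans (leq_subr _ _) j_lt_w).
rewrite (inPrefSstar_short_head k_gt0 k_le_x) ?dropkx // dropk1x.
rewrite inS_pred_size //.
have [-> | ne_a] := eqVneq (take k.-1 x) (nseq k.-1 la).
  by split=> _; [right; left | split=> // - [/andP []]].
have [-> | ne_b] := eqVneq (take k.-1 x) (nseq k.-1 lb).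
  by split=> _; [right; right | split=> // - [/andP []]].
split=> [[_ nPx] | [[_ nPj1] | [eq_a | eq_b]]].
- by left; split=> // Pj1; apply: nPx.
- by split=> // - [_ /nPj1].
- by rewrite eq_a eqxx in ne_a.
- by rewrite eq_b eqxx in ne_b.
Qed.
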